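(* Let $\mathbf{f} = (f_n)_{n\ge 1}$ be the ordinary paperfolding word over $\{0,1\}$, and let $\rho(n)$ denote its abelian complexity function (with $\rho(0)=1$). Then the sequence $(\rho(n))_{n\ge 0}$ is $2$-regular.
   Context: The ordinary paperfolding word $\mathbf{f}=(f_n)_{n\ge1}$ over $\{0,1\}$ is defined as follows: for $n\ge 1$ write $n=n'2^k$ with $n'$ odd; then $f_n=0$ if $n'\equiv 1 \pmod 4$ and $f_n=1$ if $n'\equiv 3\pmod 4$. Thus $\mathbf{f}=0010011000110110\cdots$. A factor of $\mathbf{f}$ is a finite contiguous block $f_i f_{i+1}\cdots f_{i+n-1}$. Two words $u,v$ over $\{0,1\}$ are abelian equivalent if one is a rearrangement of the other (equivalently, they have the same length and the same number of $0$'s). The abelian complexity $\rho(n)$ is the number of abelian equivalence classes among the factors of $\mathbf{f}$ of length $n$ (so $\rho(0)=1$). For an integer $k\ge2$ and an integer sequence $\mathbf{w}=(w(n))_{n\ge0}$, the $k$-kernel of $\mathbf{w}$ is the set of sequences $\{(w(k^e n+c))_{n\ge0} : e\ge0,\ 0\le c<k^e\}$; $\mathbf{w}$ is $k$-regular if the $\mathbb{Z}$-module generated by its $k$-kernel (together with the constant sequence $(1)_{n\ge0}$) is finitely generated. *)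

From HB Require Import structures.
From mathcomp Require Import all_boot all_order all_algebra.
From mathcomp Require Import boolp.
Set Implicit Arguments. Unset Strict Implicit. Unset Printing Implicit Defensive.
Import Order.TTheory GRing.Theory Num.Theory.

(* Ordinary paperfolding word, as a bool sequence: true = letter 1, false = 0.
   For n >= 1, n = n' 2^k with n' odd (k = logn 2 n); f_n = 1 iff n' = 3 mod 4.
   The value at n = 0 is irrelevant (the word is indexed from 1). *)
Definition pf (n : nat) : bool := ((n %/ 2 ^ logn 2 n) %% 4 == 3)%N.

Definition pf_factor (i n : nat) : seq bool := [seq pf (i + j) | j <- iota 0 n].

(* Abelian class of a binary word of fixed length = its number of 0's. *)
Definition nzeros (w : seq bool) : nat := count_mem false w.

(* Classes are represented by their
   number of zeros, an element of {0,...,n}. rho 0 = 1 automatically. *)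
Definition rho (n : nat) : nat :=
  #|[set k : 'I_n.+1 | `[< exists i : nat, (0 < i)%N /\ nzeros (pf_factor i n) = k >]]|.

Definition in_kernel (k : nat) (w : nat -> int) (h : nat -> int) : Prop :=
  exists e c : nat, (c < k ^ e)%N /\ h = (fun n => w (k ^ e * n + c)%N).

Definition zspan (S : (nat -> int) -> Prop) (h : nat -> int) : Prop :=
  exists (r : nat) (g : 'I_r -> nat -> int) (c : 'I_r -> int),
    (forall i, S (g i)) /\ forall n, h n = (\sum_(i < r) c i * g i n)%R.

Definition zfin_gen (M : (nat -> int) -> Prop) : Prop :=
  exists (r : nat) (g : 'I_r -> nat -> int),
    (forall i, M (g i)) /\
    forall h, M h -> exists c : 'I_r -> int, forall n, h n = (\sum_(i < r) c i * g i n)%R.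

Definition k_regular (k : nat) (w : nat -> int) : Prop :=
  zfin_gen (zspan (fun h => in_kernel k w h \/ h = (fun _ => 1%R))).

From mathcomp Require Import all_boot all_order all_algebra.
From mathcomp Require Import boolp zify ring.
Set Implicit Arguments. Unset Strict Implicit. Unset Printing Implicit Defensive.
Import Order.TTheory GRing.Theory Num.Theory.

(* Write s_k = 1 if f_k = 0 and s_k = -1 if f_k = 1, and W(n, j) = s_(j+1) + ... + s_(j+n).
   The factor of length n at position j+1 has (n + W(n, j))/2 zeros, this count changes by at
   most one when the factor moves by one position, and the reflection
   f_(2^(k+1) - i) = 1 - f_i (0 < i < 2^k) shows that min_j W(n, j) = - max_j W(n, j).
   Hence rho(n) = M(n) + 1 with M(n) = max_j W(n, j).
   The partial sums D of s satisfy D(2m + b) = D(m) + [m + b odd], so W(2n + b, 2j + c) is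
   W(n + bc, j) plus a correction depending only on b, c and the parities of n and j. The
   maxima of W(n, _) and W(n + 1, _) over starting points of each parity are therefore
   computed by a max-plus automaton reading the binary digits of n. Up to translation it has
   six states, so every M(2^e n + c) is one of eight sequences M(2^a n + d), a <= 3, plus a
   constant; these eight sequences and 1 generate the Z-module spanned by the 2-kernel. *)

Lemma unit_step_ivt (f : nat -> nat) :
  (forall j, f j.+1 <= f j + 1 /\ f j <= f j.+1 + 1) ->
  forall j1 j2 k, (f j1 <= k <= f j2) -> exists j, f j = k.
Proof.
move=> f_step.
suff between : forall j d k,
    (minn (f j) (f (j + d)) <= k <= maxn (f j) (f (j + d))) -> exists j', f j' = k.
  move=> j1 j2 k range; have [le_j|lt_j] := leqP j1 j2.
    by apply: (between j1 (j2 - j1)); rewrite subnKC //; lia.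
  by apply: (between j2 (j1 - j2)); rewrite subnKC; lia.
move=> j d; elim: d => [|d IHd] k; first by rewrite addn0 => range; exists j; lia.
rewrite addnS => range; have := f_step (j + d).
have [->|ne_k] := eqVneq k (f (j + d).+1); first by exists (j + d).+1.
by move=> ?; apply: IHd; lia.
Qed.

Lemma card_ord_interval N lo hi :
  #|[set k : 'I_N | (lo <= k <= hi)]| = (minn N hi.+1 - minn N lo).
Proof.
rewrite -sum1_card big_mkcond /=.
under eq_bigr => i _ do rewrite inE.
rewrite -(big_mkord xpredT (fun k => if (lo <= k <= hi) then 1 else 0)).
elim: N => [|N IHN]; first by rewrite big_geq //; lia.
by rewrite big_nat_recr //= IHN; case: (leqP lo N); case: (leqP N hi) => /=; lia.
Qed.

Lemma bit_decomp n : n = 2 * n./2 + odd n.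
Proof. by rewrite -[in LHS](odd_double_half n) -mul2n addnC. Qed.

Lemma half_bit m (b : bool) : (2 * m + b)./2 = m.
Proof. by rewrite addnC mul2n half_bit_double. Qed.

Lemma odd_bit m (b : bool) : odd (2 * m + b) = b.
Proof. by rewrite oddD oddM /=; case: b. Qed.

Lemma pf_odd n : odd n -> pf n = (n %% 4 == 3).
Proof. by move=> n_odd; rewrite /pf logn_coprime ?coprime2n // divn1. Qed.

Lemma pf_double n : 0 < n -> pf (2 * n) = pf n.
Proof.
by move=> n_gt0; rewrite /pf lognM // (logn_prime 2 (isT : prime 2)) add1n expnS divnMl.
Qed.

Lemma pf_double_add1 m : pf (2 * m + 1) = odd m.
Proof.
rewrite pf_odd; last by rewrite oddD oddM.
rewrite {1}(bit_decomp m).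
by case: (odd m); [apply/eqP | apply/negbTE/eqP]; lia.
Qed.

Lemma pf_reflect k i : 0 < i < 2 ^ k -> pf (2 ^ k.+1 - i) = ~~ pf i.
Proof.
elim: k i => [|k IHk] i; first by rewrite expn0; lia.
rewrite (bit_decomp i) !expnS; move: i./2 (odd i) => j [] /= range.
  have -> : 2 * (2 * 2 ^ k) - (2 * j + 1) = 2 * (2 ^ k.+1 - j.+1) + 1.
    by rewrite expnS; lia.
  rewrite !pf_double_add1 oddB ?oddS; last by rewrite expnS; lia.
  by rewrite expnS oddM /=; case: odd.
have -> : 2 * (2 * 2 ^ k) - (2 * j + 0) = 2 * (2 ^ k.+1 - j) by rewrite expnS; lia.
rewrite addn0 !pf_double ?IHk ?expnS //; lia.
Qed.

Local Open Scope ring_scope.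

Definition b2z (b : bool) : int := (b : nat)%:Z.

Definition pf_sign (k : nat) : int := if pf k then -1 else 1.

Definition disc (n : nat) : int := \sum_(i < n) pf_sign i.+1.

Definition window (n j : nat) : int := disc (j + n) - disc j.

Lemma disc0 : disc 0 = 0. Proof. by rewrite /disc big_ord0. Qed.

Lemma discS n : disc n.+1 = disc n + pf_sign n.+1.
Proof. by rewrite /disc big_ord_recr. Qed.

Lemma pf_sign_double m : (0 < m)%N -> pf_sign (2 * m) = pf_sign m.
Proof. by move=> m_gt0; rewrite /pf_sign pf_double. Qed.

Lemma pf_sign_double_add1 m : pf_sign (2 * m + 1) = b2z (~~ odd m) - b2z (odd m).
Proof. by rewrite /pf_sign pf_double_add1; case: odd. Qed.

Lemma disc_double m : disc (2 * m) = disc m + b2z (odd m).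
Proof.
elim: m => [|m IHm]; first by rewrite muln0 disc0.
have -> : (2 * m.+1 = (2 * m + 1).+1)%N by lia.
rewrite discS addn1 discS IHm -addn1 pf_sign_double_add1.
have -> : (2 * m + 1).+1 = (2 * m.+1)%N by lia.
rewrite pf_sign_double // discS /b2z /=; case: odd => /=; ring.
Qed.

Lemma disc_bit m (b : bool) : disc (2 * m + b) = disc m + b2z (odd m (+) b).
Proof.
case: b; last by rewrite addn0 addbF disc_double.
rewrite addn1 discS disc_double -addn1 pf_sign_double_add1 /b2z.
by case: odd => /=; ring.
Qed.

Definition window_corr (b c p q : bool) : int :=
  b2z (q (+) p (+) (b && c) (+) b (+) c) - b2z (q (+) c).

Lemma window_bit n j (b c : bool) :
  window (2 * n + b) (2 * j + c) =
  window (n + (b && c)) j + window_corr b c (odd n) (odd j).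
Proof.
rewrite /window /window_corr.
have -> : (2 * j + c + (2 * n + b) = 2 * (j + (n + (b && c))) + (b (+) c))%N.
  by case: b; case: c => /=; lia.
rewrite !disc_bit !oddD.
by case: b; case: c; case: (odd j); case: (odd n); rewrite /b2z /=; ring.
Qed.

Lemma window0 j : window 0 j = 0. Proof. by rewrite /window addn0 subrr. Qed.

Lemma windowS n j : window n.+1 j = window n j + pf_sign (j + n).+1.
Proof. by rewrite /window addnS discS; ring. Qed.

Lemma pf_sign_reflect k i : (0 < i < 2 ^ k)%N -> pf_sign (2 ^ k.+1 - i) = - pf_sign i.
Proof. by move=> range; rewrite /pf_sign pf_reflect //; case: pf. Qed.

Lemma window_reflect_at k n j : (j + n < 2 ^ k)%N ->
  window n (2 ^ k.+1 - 1 - (j + n)) = - window n j.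
Proof.
elim: n => [|n IHn] range; first by rewrite !window0 oppr0.
set x := (2 ^ k.+1 - 1 - (j + n.+1))%N.
have x_succ : (2 ^ k.+1 - 1 - (j + n))%N = x.+1 by rewrite /x expnS; lia.
have sign_x : pf_sign x.+1 = - pf_sign (j + n).+1.
  have -> : x.+1 = (2 ^ k.+1 - (j + n).+1)%N by rewrite /x expnS; lia.
  by rewrite pf_sign_reflect //; lia.
have -> : window n.+1 x = window n x.+1 + pf_sign x.+1.
  by rewrite /window addnS addSn !discS; ring.
rewrite -{1}x_succ IHn; last by lia.
by rewrite sign_x windowS; ring.
Qed.

Lemma window_reflect n j : exists j', window n j' = - window n j.
Proof. by eexists; apply: (window_reflect_at (k := j + n)); exact: ltn_expl. Qed.

Definition factor_zeros (j n : nat) : nat := nzeros (pf_factor j.+1 n).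

Lemma factor_zerosS j n :
  factor_zeros j n.+1 = (factor_zeros j n + ~~ pf (j + n).+1)%N.
Proof.
rewrite /factor_zeros /nzeros /pf_factor -[n.+1]addn1 iotaD map_cat count_cat /=.
by rewrite add0n addn0 addSn; case: pf.
Qed.

Lemma factor_zeros_le j n : (factor_zeros j n <= n)%N.
Proof. by rewrite (leq_trans (count_size _ _)) // size_map size_iota. Qed.

Lemma factor_zeros_window j n : 2 * (factor_zeros j n)%:Z = n%:Z + window n j.
Proof.
elim: n => [|n IHn]; first by rewrite window0 /factor_zeros /pf_factor.
by rewrite factor_zerosS windowS /pf_sign; case: pf => /=; lia.
Qed.

Lemma factor_zeros_shift j n :
  (factor_zeros j.+1 n <= factor_zeros j n + 1 /\ factor_zeros j n <= factor_zeros j.+1 n + 1)%N.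
Proof.
have := factor_zeros_window j n; have := factor_zeros_window j.+1 n.
have -> : window n j.+1 = window n j + pf_sign (j + n).+1 - pf_sign j.+1.
  by rewrite /window addSn !discS; ring.
by rewrite /pf_sign; case: pf; case: pf => /=; lia.
Qed.

Lemma rho_window_max n (M : int) :
  (forall j, window n j <= M) -> (exists j, window n j = M) -> (rho n)%:Z = M + 1.
Proof.
move=> le_M [jM attM].
have [jm attm] : exists j, window n j = - M.
  by have [j eq] := window_reflect n jM; exists j; rewrite eq attM.
have ge_M j : - M <= window n j.
  by have [j' eq] := window_reflect n j; rewrite lerNl -eq.
have z_bounds j : (factor_zeros jm n <= factor_zeros j n <= factor_zeros jM n)%N.
  have := factor_zeros_window j n; have := factor_zeros_window jm n.
  have := factor_zeros_window jM n; have := le_M j; have := ge_M j; lia.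
rewrite /rho.
have -> : [set k : 'I_n.+1 | `[< exists i, (0 < i)%N /\ nzeros (pf_factor i n) = k >]] =
          [set k : 'I_n.+1 | (factor_zeros jm n <= k <= factor_zeros jM n)%N].
  apply/setP => k; rewrite !inE; apply/asboolP/idP => [[[|i] [//= _ <-]] | range].
    exact: z_bounds.
  have [j <-] := unit_step_ivt (factor_zeros_shift ^~ n) range.
  by exists j.+1.
rewrite card_ord_interval.
have := factor_zeros_window jm n; have := factor_zeros_window jM n.
have := factor_zeros_le jm n; have := factor_zeros_le jM n; have := z_bounds jm; lia.
Qed.

(* The state of n is ((U n false, U n true), (U (n+1) false, U (n+1) true)), where U n q is
   the largest window sum W(n, j) over starting points j of parity q; [step b p] computes
   the state of 2m + b from the state of m, whose parity is p, by maximizing [window_bit]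
   (in [halves false p w] only [w.1] is read, whence the duplicated pair in [step]). *)
Definition state := ((int * int) * (int * int))%type.

Definition half_max (b p : bool) (v : state) (c : bool) : int :=
  let u := if b && c then v.2 else v.1 in
  Num.max (u.1 + window_corr b c p false) (u.2 + window_corr b c p true).

Definition halves (b p : bool) (v : state) : int * int :=
  (half_max b p v false, half_max b p v true).

Definition step (b p : bool) (v : state) : state :=
  if b then (halves true p v, halves false (~~ p) (v.2, v.2))
  else (halves false p v, halves true p v).

Definition state0 : state := ((0, 0), (1, 1)).

Fixpoint state_fuel (k n : nat) : state :=
  if k is k'.+1 then
    if n is 0 then state0 else step (odd n) (odd n./2) (state_fuel k' n./2)
  else state0.

Definition pf_state (n : nat) : state := state_fuel n n.

Lemma state_fuel_enough k1 k2 n :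
  (n <= k1)%N -> (n <= k2)%N -> state_fuel k1 n = state_fuel k2 n.
Proof.
elim: k1 k2 n => [|k1 IHk] [|k2] [|n] //= le1 le2.
by rewrite (IHk k2) //; have := bit_decomp n.+1; have := leq_b1 (odd n.+1); lia.
Qed.

Lemma pf_state_pos n : (0 < n)%N -> pf_state n = step (odd n) (odd n./2) (pf_state n./2).
Proof.
case: n => [//|n] _; rewrite /pf_state /=; congr step; apply: state_fuel_enough => //.
by have := bit_decomp n.+1; have := leq_b1 (odd n.+1); lia.
Qed.

Lemma pf_state_bit m (b : bool) : pf_state (2 * m + b) = step b (odd m) (pf_state m).
Proof.
case: m => [|m]; first by case: b.
by rewrite pf_state_pos ?half_bit ?odd_bit //; lia.
Qed.

Lemma pf_state_succ n : (pf_state n).2 = (pf_state n.+1).1.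
Proof.
elim/ltn_ind: n => n IHn; move: IHn; rewrite (bit_decomp n).
move: n./2 (odd n) => m [] IHm.
  have -> : ((2 * m + true).+1 = 2 * m.+1 + false)%N by rewrite /=; lia.
  rewrite !pf_state_bit /= (IHm m); last by rewrite /=; lia.
  by rewrite /halves /half_max.
have -> : ((2 * m + false).+1 = 2 * m + true)%N by rewrite /=; lia.
by rewrite !pf_state_bit.
Qed.

Definition umax (n : nat) (q : bool) : int :=
  if q then (pf_state n).1.2 else (pf_state n).1.1.

Lemma umax_bit n (b c : bool) :
  umax (2 * n + b) c =
  Num.max (umax (n + (b && c)) false + window_corr b c (odd n) false)
          (umax (n + (b && c)) true + window_corr b c (odd n) true).
Proof.
rewrite /umax pf_state_bit.
case: b; case: c; rewrite /= ?addn0 ?addn1 -?pf_state_succ //.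
Qed.

Definition parity_max (n : nat) : Prop :=
  forall q : bool, (forall j, odd j = q -> window n j <= umax n q) /\
                   exists2 j, odd j = q & window n j = umax n q.

Lemma parity_max_bit m (b : bool) :
  (forall c : bool, parity_max (m + (b && c))) -> parity_max (2 * m + b).
Proof.
move=> IHm q; split=> [j <-|].
  rewrite [in window _ j](bit_decomp j) window_bit umax_bit le_max.
  have [le_u _] := IHm (odd j) (odd j./2).
  by case: (odd j./2) (le_u j./2 erefl) => le; rewrite lerD2r le ?orbT.
pose u q' := umax (m + (b && q)) q' + window_corr b q (odd m) q'.
rewrite umax_bit -[Num.max _ _]/(Num.max (u false) (u true)).
have [q' max_q'] : exists q', Num.max (u false) (u true) = u q'.
  by have [_|_] := leP (u false) (u true); [exists true | exists false].
have [_ [j odd_j att_j]] := IHm q q'.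
by exists (2 * j + q)%N; rewrite ?odd_bit // window_bit att_j max_q' odd_j.
Qed.

Lemma parity_max0 : parity_max 0.
Proof. by move=> q; split=> [j _|]; [| exists (q : nat)]; rewrite ?window0; case: q. Qed.

Lemma parity_max1 : parity_max 1.
Proof.
have w1 j : window 1 j = pf_sign j.+1 by rewrite windowS window0 add0r addn0.
move=> q; split=> [j _|]; first by rewrite w1 /umax /pf_sign; case: q; case: pf.
by exists (q : nat); case: q.
Qed.

Lemma parity_max_all n : parity_max n.
Proof.
elim/ltn_ind: n => n IHn.
have [n_le1|n_gt1] := leqP n 1; first by case: n n_le1 {IHn} => [|[|]] // _;
  [exact: parity_max0 | exact: parity_max1].
rewrite (bit_decomp n); apply: parity_max_bit => c; apply: IHn.
by have := bit_decomp n; case: (odd n) c => [] [] /=; lia.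
Qed.

Definition top (v : state) : int := Num.max v.1.1 v.1.2.

Lemma window_le_top n j : window n j <= top (pf_state n).
Proof.
have [le_u _] := parity_max_all n (odd j).
by rewrite /top le_max; move: (le_u j erefl); rewrite /umax; case: odd => ->; rewrite ?orbT.
Qed.

Lemma top_attained n : exists j, window n j = top (pf_state n).
Proof.
have pick q : exists j, window n j = umax n q.
  by have [_ [j _ att]] := parity_max_all n q; exists j.
rewrite /top; have [_|_] := leP (pf_state n).1.1 (pf_state n).1.2.
  exact: (pick true).
exact: (pick false).
Qed.

Lemma rho_top n : (rho n)%:Z = top (pf_state n) + 1.
Proof. exact: rho_window_max (window_le_top n) (top_attained n). Qed.

Definition shift_state (k : int) (v : state) : state :=
  ((v.1.1 + k, v.1.2 + k), (v.2.1 + k, v.2.2 + k)).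

Definition normalize (v : state) : state := shift_state (- v.1.1) v.

Lemma shift_normalize v : v = shift_state v.1.1 (normalize v).
Proof. by case: v => [[a0 a1] [b0 b1]]; rewrite /normalize /shift_state /= !subrK. Qed.

Lemma normalize_shift k v : normalize (shift_state k v) = normalize v.
Proof.
have E x y : x + k + - (y + k) = x + - y by ring.
by case: v => [[a0 a1] [b0 b1]]; rewrite /normalize /shift_state /= !E.
Qed.

Lemma top_shift k v : top (shift_state k v) = top v + k.
Proof. by rewrite /top addr_maxl. Qed.

Lemma half_max_shift b p k v c : half_max b p (shift_state k v) c = half_max b p v c + k.
Proof. by rewrite /half_max addr_maxl; case: (b && c); rewrite /= !(addrAC _ k). Qed.

Lemma step_shift b p k v : step b p (shift_state k v) = shift_state k (step b p v).
Proof.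
rewrite /step /halves -[((shift_state k v).2, _)]/(shift_state k (v.2, v.2)).
by case: b; rewrite !half_max_shift.
Qed.

(* The state reached from [v] (the state of a number of parity [p]) by appending
   the [e] binary digits of [c]. *)
Fixpoint step_digits (e c : nat) (p : bool) (v : state) : state :=
  if e is e'.+1 then step (odd c) (if e' is 0 then p else odd c./2) (step_digits e' c./2 p v)
  else v.

Lemma step_digits_shift e c p k v :
  step_digits e c p (shift_state k v) = shift_state k (step_digits e c p v).
Proof. by elim: e c => [|e IHe] c //=; rewrite IHe step_shift. Qed.

Lemma pf_state_digits e c n : (c < 2 ^ e)%N ->
  pf_state (2 ^ e * n + c) = step_digits e c (odd n) (pf_state n).
Proof.
elim: e c => [|e IHe] c; first by rewrite expn0 ltnS leqn0 mul1n => /eqP ->; rewrite addn0.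
rewrite expnS => c_lt.
have c2_lt : (c./2 < 2 ^ e)%N by have := bit_decomp c; have := leq_b1 (odd c); lia.
have -> : (2 * 2 ^ e * n + c = 2 * (2 ^ e * n + c./2) + odd c)%N.
  by have := bit_decomp c; lia.
rewrite pf_state_bit IHe //=; congr step; case: e {IHe c_lt} c2_lt => [|e] c2_lt.
  by move: c2_lt; rewrite expn0 ltnS leqn0 mul1n => /eqP ->; rewrite addn0.
by rewrite oddD expnS -mulnA oddM.
Qed.

(* Found by exploring the orbit of [state0] under [step] up to translation. *)
Definition normal_states : seq state :=
  [:: ((0, -2), (-1, -1)); ((0, 0), (-1, -1)); ((0, 0), (-1, 1));
      ((0, 0), (1, -1)); ((0, 0), (1, 1)); ((0, 2), (1, 1))].

Lemma normal_states_closed :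
  all (fun v => all (fun p => all (fun b => normalize (step b p v) \in normal_states)
                                  [:: false; true]) [:: false; true]) normal_states.
Proof. by vm_compute. Qed.

Lemma mem_bools (b : bool) : b \in [:: false; true]. Proof. by case: b. Qed.

Lemma normalize_pf_state n : normalize (pf_state n) \in normal_states.
Proof.
elim/ltn_ind: n => n IHn; have [->|n_gt0] := posnP n; first by vm_compute.
have half_lt : (n./2 < n)%N by have := bit_decomp n; have := leq_b1 (odd n); lia.
rewrite (bit_decomp n) pf_state_bit (shift_normalize (pf_state n./2)).
rewrite step_shift normalize_shift.
have /allP/(_ _ (IHn _ half_lt))/allP/(_ _ (mem_bools (odd n./2)))/allP := normal_states_closed.
by apply; rewrite mem_bools.
Qed.

Lemma pf_state_translate n :
  exists2 v, v \in normal_states & exists a, pf_state n = shift_state a v.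
Proof.
exists (normalize (pf_state n)); first exact: normalize_pf_state.
by eexists; exact: shift_normalize.
Qed.

Definition kernel_shift_ok (e c e' c' : nat) (k : int) : bool :=
  [&& (c < 2 ^ e)%N, (c' < 2 ^ e')%N &
      all (fun v => all (fun p => top (step_digits e c p v) == top (step_digits e' c' p v) + k)
                        [:: false; true]) normal_states].

Lemma kernel_shift_okP e c e' c' k : kernel_shift_ok e c e' c' k ->
  forall n, top (pf_state (2 ^ e * n + c)) = top (pf_state (2 ^ e' * n + c')) + k.
Proof.
case/and3P=> c_lt c'_lt /allP ok n; rewrite !pf_state_digits //.
have [v v_normal [a ->]] := pf_state_translate n.
rewrite !step_digits_shift !top_shift.
have /allP/(_ _ (mem_bools (odd n)))/eqP -> := ok _ v_normal.
by rewrite addrAC.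
Qed.

Definition reduces_to (targets : seq (nat * nat)) (e c : nat) : bool :=
  has (fun t => has (kernel_shift_ok e c t.1 t.2) [:: 0; 1; 2]) targets.

Lemma reduces_toP targets e c : reduces_to targets e c ->
  exists2 t, t \in targets & (t.2 < 2 ^ t.1)%N /\ exists k, forall n,
    top (pf_state (2 ^ e * n + c)) = top (pf_state (2 ^ t.1 * n + t.2)) + k.
Proof.
case/hasP=> t t_in /hasP[k _ ok]; exists t => //.
by split; [case/and3P: ok | exists k; exact: kernel_shift_okP].
Qed.

Definition kernel_base : seq (nat * nat) :=
  [:: (0, 0); (1, 0); (1, 1); (2, 1); (2, 3); (3, 3); (3, 5); (3, 7)]%N.

Lemma kernel_small_reduce :
  all (fun e => all (reduces_to kernel_base e) (iota 0 (2 ^ e))) (iota 0 4).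
Proof. by vm_compute. Qed.

Lemma kernel_residue_reduce :
  all (reduces_to [seq (a, d) | a <- iota 0 4, d <- iota 0 (2 ^ a)] 4) (iota 0 16).
Proof. by vm_compute. Qed.

Lemma kernel_descend e c : (3 < e)%N -> (c < 2 ^ e)%N ->
  exists e' c' (k : int), [/\ (e' < e)%N, (c' < 2 ^ e')%N &
    forall n, top (pf_state (2 ^ e * n + c)) = top (pf_state (2 ^ e' * n + c')) + k].
Proof.
move=> e_gt3 c_lt; set q := (c %/ 16)%N; set e4 := (e - 4)%N.
have r_in : (c %% 16)%N \in iota 0 16 by rewrite mem_iota ltn_mod.
have [_ /allpairsPdep[a [d [a_in _ ->]]] [/= d_lt [k red]]] :=
  reduces_toP (allP kernel_residue_reduce _ r_in).
have split_e : (2 ^ e = 2 ^ 4 * 2 ^ e4)%N by rewrite -expnD /e4 subnKC.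
have q_lt : (q < 2 ^ e4)%N by rewrite ltn_divLR // mulnC -split_e.
exists (a + e4)%N, (2 ^ a * q + d)%N, k; split.
- by move: a_in; rewrite mem_iota /e4; lia.
- by rewrite expnD; move: (2 ^ a)%N (2 ^ e4)%N d_lt q_lt => A Q; nia.
move=> n; have -> : (2 ^ e * n + c = 2 ^ 4 * (2 ^ e4 * n + q) + c %% 16)%N.
  by rewrite split_e (divn_eq c 16) modnMDl -/q; lia.
by rewrite red expnD mulnDr mulnA addnA.
Qed.

Lemma kernel_reduction e c : (c < 2 ^ e)%N ->
  exists2 t, t \in kernel_base & exists k, forall n,
    top (pf_state (2 ^ e * n + c)) = top (pf_state (2 ^ t.1 * n + t.2)) + k.
Proof.
elim/ltn_ind: e c => e IHe c c_lt; have [e_le3|e_gt3] := leqP e 3.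
  have e_in : e \in iota 0 4 by rewrite mem_iota.
  have c_in : c \in iota 0 (2 ^ e) by rewrite mem_iota.
  have [t t_in [_ red]] := reduces_toP (allP (allP kernel_small_reduce e e_in) c c_in).
  by exists t.
have [e' [c' [k [e'_lt c'_lt red]]]] := kernel_descend e_gt3 c_lt.
have [t t_in [k' red']] := IHe e' e'_lt c' c'_lt.
by exists t => //; exists (k' + k) => n; rewrite red red' addrA.
Qed.

Section IntegerCombinations.

Variables (r : nat) (g : 'I_r -> nat -> int).

Definition zcomb (h : nat -> int) : Prop :=
  exists c : 'I_r -> int, forall n, h n = \sum_(i < r) c i * g i n.

Lemma zcomb_gen i : zcomb (g i).
Proof.
exists (fun j => (j == i)%:R) => n.
by rewrite (bigD1 i) //= eqxx mul1r big1 ?addr0 // => j /negbTE->; rewrite mul0r.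
Qed.

Lemma zcomb_lin (a : int) h1 h2 : zcomb h1 -> zcomb h2 -> zcomb (fun n => a * h1 n + h2 n).
Proof.
move=> [c1 def_h1] [c2 def_h2]; exists (fun i => a * c1 i + c2 i) => n.
rewrite def_h1 def_h2 mulr_sumr -big_split /=.
by apply: eq_bigr => i _; rewrite mulrDl mulrA.
Qed.

Lemma zcomb_sum r' (a : 'I_r' -> int) (f : 'I_r' -> nat -> int) :
  (forall i, zcomb (f i)) -> zcomb (fun n => \sum_(i < r') a i * f i n).
Proof.
elim: r' a f => [|r' IHr] a f f_comb.
  by exists (fun=> 0) => n; rewrite big_ord0 big1 // => i _; rewrite mul0r.
have [c def_f] := zcomb_lin (a ord0) (f_comb ord0)
  (IHr (fun i => a (lift ord0 i)) (fun i => f (lift ord0 i)) (fun i => f_comb _)).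
by exists c => n; rewrite big_ord_recl def_f.
Qed.

End IntegerCombinations.

Lemma k_regular_of_zcomb k (w : nat -> int) r (g : 'I_r -> nat -> int) :
  (forall i, in_kernel k w (g i) \/ g i = (fun=> 1)) ->
  (forall h, in_kernel k w h \/ h = (fun=> 1) -> zcomb g h) ->
  k_regular k w.
Proof.
move=> g_gen h_comb; exists r, g; split=> [i|h [r' [f [a [f_gen def_h]]]]].
  by exists 1%N, (fun=> g i), (fun=> 1); split=> // n; rewrite big_ord1 mul1r.
have [c def_c] := zcomb_sum a (fun i => h_comb _ (f_gen i)).
by exists c => n; rewrite def_h def_c.
Qed.

Lemma rho_kernel_reduction e c : (c < 2 ^ e)%N ->
  exists2 t, t \in kernel_base & exists k, forall n,
    (rho (2 ^ e * n + c))%:Z = (rho (2 ^ t.1 * n + t.2))%:Z + k.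
Proof.
move=> c_lt; have [t t_in [k red]] := kernel_reduction c_lt.
by exists t => //; exists k => n; rewrite !rho_top red addrAC.
Qed.

Definition rho_gen (i : 'I_(size kernel_base).+1) (n : nat) : int :=
  let t := nth (0, 0)%N kernel_base i in
  if (i < size kernel_base)%N then (rho (2 ^ t.1 * n + t.2))%:Z else 1.

Lemma rho_gen_const : rho_gen ord_max = fun=> 1.
Proof. by []. Qed.

Lemma rho_gen_base t : t \in kernel_base ->
  exists i, rho_gen i = fun n => (rho (2 ^ t.1 * n + t.2))%:Z.
Proof.
move=> t_in; have t_lt : (index t kernel_base < (size kernel_base).+1)%N.
  by rewrite ltnS ltnW // index_mem.
by exists (Ordinal t_lt); rewrite /rho_gen index_mem t_in nth_index.
Qed.

Lemma rho_gen_kernel i :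
  in_kernel 2 (fun n => Posz (rho n)) (rho_gen i) \/ rho_gen i = fun=> 1.
Proof.
rewrite /rho_gen; case: ltnP => [i_lt|_]; [left | by right].
exists (nth (0, 0)%N kernel_base i).1, (nth (0, 0)%N kernel_base i).2; split=> //.
by have /allP := (isT : all (fun t => t.2 < 2 ^ t.1)%N kernel_base); apply; exact: mem_nth.
Qed.

Local Close Scope ring_scope.

Theorem theorem1 : k_regular 2 (fun n => Posz (rho n)).
Proof.
apply: (k_regular_of_zcomb rho_gen_kernel) => h [[e [c [c_lt ->]]] | ->].
  have [t t_in [k red]] := rho_kernel_reduction c_lt.
  have [i gen_i] := rho_gen_base t_in.
  have [a def_h] := zcomb_lin k (zcomb_gen rho_gen ord_max) (zcomb_gen rho_gen i).
  by exists a => n; rewrite -def_h red gen_i rho_gen_const mulr1 addrC.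
by rewrite -rho_gen_const; exact: zcomb_gen.
Qed.
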